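(* Let $N\ge1$ and $L=\sum_{i=0}^N a_i(x)\partial_x^i$ with $a_i(x)=\sum_{j=0}^i a_{i,j}x^j$ complex polynomials, $a_0\equiv0$, and $a_i\equiv 0$ for $i>N$. Suppose there are complex numbers $\lambda_n$ ($n\ge0$, $\lambda_0=0$) and monic polynomials $P_n(x)=\sum_{i=0}^n b_{n,i}x^i$ of degree $n$ such that $\sum_{i=1}^N a_i(x)\partial_x^iP_n(x)=\lambda_nP_n(x)$ for all $n\ge0$, and assume $\lambda_n\notin\{0,\lambda_1,\ldots,\lambda_{n-1}\}$ for all $n\ge1$. Let $\delta_n^{(k)}=\sum_{i=k}^{n}\binom{n}{i}i!\,a_{i,i-k}$ for $0\le k\le n$. Then for every $n\ge0$ and $i=0,1,\ldots,n-1$, $$b_{n,i}=\sum_{(i_1,\ldots,i_k)\in E_n^{(i)}}\ \prod_{s=1}^k\frac{\delta^{(i_s)}_{i+i_1+\cdots+i_s}}{\lambda_n-\lambda_{i+i_1+\cdots+i_{s-1}}},$$ where $E_n^{(i)}=\{(i_1,\ldots,i_k): k\ge1,\ i_1,\ldots,i_k \text{ positive integers},\ i_1+\cdots+i_k=n-i\}$ and $i+i_1+\cdots+i_{s-1}$ is understood as $i$ when $s=1$.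
   Context: $\partial_x^i$ denotes the $i$-th derivative in $x$. Note $\delta^{(k)}_m=0$ whenever $k>N$, since then all $a_{i,i-k}$ with $i\ge k$ vanish. *)

From HB Require Import structures.
From mathcomp Require Import all_boot all_order all_algebra.
Set Implicit Arguments. Unset Strict Implicit. Unset Printing Implicit Defensive.
Import Order.TTheory GRing.Theory Num.Theory.
Local Open Scope ring_scope.

Definition Lop (C : fieldType) (N : nat) (A : nat -> {poly C}) (p : {poly C}) : {poly C} :=
  \sum_(1 <= i < N.+1) A i * p^`(i).

Definition delta (C : fieldType) (A : nat -> {poly C}) (n k : nat) : C :=
  \sum_(k <= i < n.+1) ('C(n, i) * i`!)%:R * (A i)`_(i - k).

From HB Require Import structures.
From mathcomp Require Import all_boot all_order all_algebra.
Import Order.TTheory GRing.Theory Num.Theory.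
From mathcomp Require Import zify.
Set Implicit Arguments. Unset Strict Implicit. Unset Printing Implicit Defensive.
Local Open Scope ring_scope.

(* Comparing the coefficients of x^i in L P_n = lam_n P_n, and using that the
   coefficient of x^j in L x^m is delta_m^(m-j) for j <= m (so delta_m^(0) = lam_m),
   gives the triangular recursion
     b_{n,i} (lam_n - lam_i) = sum_{j=1}^{n-i} b_{n,i+j} delta_{i+j}^(j).
   As lam_n != lam_i for i < n, unfolding it down to b_{n,n} = 1 writes b_{n,i}
   as a sum over the compositions (j_1, ..., j_k) of n - i, each contributing the
   product of the factors delta_{i+j_1+...+j_s}^(j_s) / (lam_n - lam_{i+j_1+...+j_(s-1)}). *)

Lemma sum_nat_widen_supp (V : nmodType) (a b K : nat) (F : nat -> V) :
  (b <= K)%N -> (forall i, (i < a)%N || (b <= i)%N -> F i = 0) ->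
  \sum_(a <= i < b) F i = \sum_(0 <= i < K) F i.
Proof.
move=> bK F0; have [ab|ba] := leqP a b; last first.
  by rewrite big_geq ?(ltnW ba) // big1 // => i _; apply: F0; lia.
rewrite (@big_cat_nat _ _ _ a 0 K) ?(leq_trans ab bK) // (@big_cat_nat _ _ _ b a K) //=.
rewrite [X in X + _]big1_seq ?add0r; last first.
  by move=> i /andP[_]; rewrite mem_index_iota => /andP[_ ia]; rewrite F0 ?ia.
rewrite [X in _ + X]big1_seq ?addr0 // => i /andP[_].
by rewrite mem_index_iota => /andP[bi _]; rewrite F0 ?bi ?orbT.
Qed.

Section PathWeight.
Variables (R : pzSemiRingType) (g : nat -> nat -> R).

Fixpoint path_weight (i : nat) (c : seq nat) : R :=
  if c is j :: c' then g i j * path_weight (i + j) c' else 1.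

Lemma prod_path_weight k (u : 'I_k -> nat) i :
  \prod_(s < k) g (i + \sum_(r < k | (r < s)%N) u r) (u s) =
  path_weight i [seq u s | s <- enum 'I_k].
Proof.
elim: k u i => [|k IH] u i; first by rewrite big_ord0 enum_ord0.
rewrite big_ord_recl enum_ordSl /= big_pred0 ?addn0 //.
rewrite -map_comp -IH; congr (_ * _); apply: eq_bigr => s _.
by rewrite big_mkcond big_ord_recl /= -big_mkcond addnA.
Qed.

End PathWeight.

Lemma big_ord_leq_ltn k (u : 'I_k -> nat) (s : 'I_k) :
  (\sum_(r < k | (r <= s)%N) u r = \sum_(r < k | (r < s)%N) u r + u s)%N.
Proof.
rewrite (bigD1 s) //= addnC; congr (_ + _)%N.
by apply: eq_bigl => r; rewrite ltn_neqAle andbC.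
Qed.

(* [fuel] only bounds the recursion depth: any [fuel >= D] yields all the
   compositions of [D]. *)
Fixpoint compositions_rec (fuel D : nat) : seq (seq nat) :=
  if (fuel, D) is (fuel'.+1, _.+1) then
    [seq j :: c | j <- iota 1 D, c <- compositions_rec fuel' (D - j)]
  else [:: [::]].

Definition compositions (D : nat) : seq (seq nat) := compositions_rec D D.

Definition is_composition (D : nat) (c : seq nat) : bool :=
  all (fun j => 0 < j)%N c && (sumn c == D).

Lemma is_composition0 c : is_composition 0 c = (c == [::]).
Proof. by case: c => [|[|j] c] //; rewrite /is_composition /= addSn andbF. Qed.

Lemma mem_compositions_rec fuel D c : (D <= fuel)%N ->
  (c \in compositions_rec fuel D) = is_composition D c.
Proof.
elim: fuel D c => [|fuel IH] [|D] c // D_le; try by rewrite inE is_composition0.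
apply/allpairsPdep/idP => [[j [c' [+ + ->]]]|].
  rewrite mem_iota => /andP[j_gt0 j_le]; rewrite IH; last lia.
  by move=> /andP[c'_pos /eqP sum_c']; rewrite /is_composition /= j_gt0 c'_pos; apply/eqP; lia.
case: c => [|j c] // /andP[/andP[j_gt0 c_pos] /eqP sum_jc].
have {}sum_jc : (j + sumn c = D.+1)%N := sum_jc.
exists j, c; rewrite mem_iota IH; last lia.
split=> //; first by rewrite j_gt0 /=; lia.
by apply/andP; split=> //; apply/eqP; lia.
Qed.

Lemma mem_compositions D c : (c \in compositions D) = is_composition D c.
Proof. exact: mem_compositions_rec. Qed.

Lemma compositions_rec_uniq fuel D : uniq (compositions_rec fuel D).
Proof.
elim: fuel D => [|fuel IH] [|D] //.
apply: allpairs_uniq_dep => [|j _|[j1 c1] [j2 c2] _ _ /= [-> ->]] //.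
exact: iota_uniq.
Qed.

Lemma compositions_uniq D : uniq (compositions D).
Proof. exact: compositions_rec_uniq. Qed.

Lemma leq_sumn (c : seq nat) x : x \in c -> (x <= sumn c)%N.
Proof.
elim: c => //= y c IH; rewrite inE => /predU1P[->|/IH x_le]; first exact: leq_addr.
exact: leq_trans x_le (leq_addl _ _).
Qed.

Lemma size_composition D c : is_composition D c -> (0 < D)%N -> (0 < size c <= D)%N.
Proof.
case/andP=> c_pos /eqP <-; case: c c_pos => // j c /= /andP[j_gt0 c_pos] _.
rewrite -add1n leq_add //; elim: c c_pos => //= x c IH /andP[x_gt0 /IH].
by rewrite -add1n; apply: leq_add.
Qed.

Lemma big_compositions_size (V : nmodType) D (F : seq nat -> V) : (0 < D)%N ->
  \sum_(c <- compositions D) F c =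
  \sum_(1 <= k < D.+1) \sum_(c <- compositions D | size c == k) F c.
Proof.
move=> D_gt0; symmetry; under eq_bigr do rewrite big_mkcond; rewrite exchange_big /=.
apply: eq_big_seq => c; rewrite mem_compositions => c_comp.
under eq_bigr do rewrite eq_sym; rewrite -big_mkcond big_nat1_eq.
by rewrite ltnS size_composition.
Qed.

Section CompositionsAsFunctions.
Variables (D k : nat).

Definition ffun_composition : pred {ffun 'I_k -> 'I_D.+1} :=
  fun t => [forall s, (0 < t s)%N] && (\sum_(s < k) (t s : nat) == D)%N.

Definition seq_of_ffun (t : {ffun 'I_k -> 'I_D.+1}) : seq nat :=
  [seq (t s : nat) | s <- enum 'I_k].

Lemma nth_seq_of_ffun t (s : 'I_k) : nth 0%N (seq_of_ffun t) s = t s.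
Proof. by rewrite (nth_map s) ?size_enum_ord // nth_ord_enum. Qed.

Lemma seq_of_ffun_inj : injective seq_of_ffun.
Proof.
move=> t1 t2 eq_t; apply/ffunP => s; apply/val_inj.
by rewrite /= -!nth_seq_of_ffun eq_t.
Qed.

Lemma mem_image_seq_of_ffun c :
  (c \in [seq seq_of_ffun t | t in ffun_composition]) =
  is_composition D c && (size c == k).
Proof.
apply/imageP/andP => [[t /andP[/forallP t_pos /eqP sum_t] ->]|].
  rewrite /seq_of_ffun size_map size_enum_ord; split=> //; apply/andP; split.
    by apply/allP => _ /mapP[s _ ->]; apply: t_pos.
  by rewrite sumnE big_map big_enum; apply/eqP.
move=> [/andP[c_pos /eqP sum_c] /eqP size_c].
have c_small (s : 'I_k) : (nth 0 c s < D.+1)%N.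
  by rewrite ltnS -sum_c leq_sumn // mem_nth // size_c.
exists [ffun s : 'I_k => inord (nth 0 c s) : 'I_D.+1].
  apply/andP; split.
    by apply/forallP => s; rewrite ffunE inordK // (allP c_pos) // mem_nth ?size_c.
  apply/eqP; rewrite -[RHS]sum_c sumnE (big_nth 0%N) big_mkord size_c.
  by apply/eq_bigr => s _; rewrite ffunE inordK.
apply: (@eq_from_nth _ 0%N) => [|j]; first by rewrite size_map size_enum_ord.
rewrite size_c => j_lt; have -> : j = Ordinal j_lt by [].
by rewrite nth_seq_of_ffun ffunE inordK.
Qed.

Lemma big_ffun_compositions (V : nmodType) (F : seq nat -> V) :
  \sum_(t | ffun_composition t) F (seq_of_ffun t) =
  \sum_(c <- compositions D | size c == k) F c.
Proof.
rewrite -big_image -[RHS]big_filter; apply/perm_big/uniq_perm.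
- by rewrite map_inj_uniq ?enum_uniq //; apply: seq_of_ffun_inj.
- exact/filter_uniq/compositions_uniq.
by move=> c; rewrite mem_filter mem_image_seq_of_ffun mem_compositions andbC.
Qed.

End CompositionsAsFunctions.

Lemma coef_mul_derivn_Xn (R : nzSemiRingType) (p : {poly R}) m i j :
  (p * ('X^m)^`(i))`_j = (if (j + i < m)%N then 0 else p`_(j + i - m)) *+ m ^_ i.
Proof.
rewrite derivnXn mulrnAr coefMn coefMXn.
have [i_le|m_lt] := leqP i m; last by rewrite ffact_small ?mulr0n.
have -> : (j < m - i)%N = (j + i < m)%N by lia.
by case: ltnP => // _; do 2 f_equal; lia.
Qed.

Section EigenPolynomials.
Variables (C : fieldType) (N : nat) (A : nat -> {poly C}).
Hypothesis size_A : forall i, (size (A i) <= i.+1)%N.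
Hypothesis A0 : A 0%N = 0.
Hypothesis A_gtN : forall i, (N < i)%N -> A i = 0.

Lemma coef_Lop_Xn m j :
  (Lop N A 'X^m)`_j = if (j <= m)%N then delta A m (m - j) else 0.
Proof.
pose E i := (if (j + i < m)%N then 0 else (A i)`_(j + i - m)) *+ m ^_ i.
have Lop_E : (Lop N A 'X^m)`_j = \sum_(0 <= i < (N + m).+1) E i.
  rewrite /Lop coef_sum; under eq_bigr do rewrite coef_mul_derivn_Xn.
  apply: sum_nat_widen_supp => [|i /orP[|/A_gtN A_eq0]]; first lia.
    by rewrite ltnS leqn0 => /eqP->; rewrite /E A0 coef0 if_same mul0rn.
  by rewrite /E A_eq0 coef0 if_same mul0rn.
rewrite Lop_E; case: leqP => [j_le|m_lt]; last first.
  rewrite big1 // => i _; rewrite /E nth_default ?if_same ?mul0rn //.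
  by apply: leq_trans (size_A i) _; lia.
symmetry; transitivity (\sum_(m - j <= i < m.+1) E i).
  apply: eq_big_nat => i /andP[i_ge i_le].
  rewrite /E ifF; last lia.
  by rewrite bin_ffact mulr_natl; have -> : (i - (m - j) = j + i - m)%N by lia.
apply: sum_nat_widen_supp => [|i /orP[i_lt|m_lt]]; first lia.
  by rewrite /E ifT ?mul0rn //; lia.
by rewrite /E ffact_small ?mulr0n.
Qed.

Lemma Lop_sumZ K (c : nat -> C) (q : nat -> {poly C}) :
  Lop N A (\sum_(m < K) c m *: q m) = \sum_(m < K) c m *: Lop N A (q m).
Proof.
rewrite /Lop; under eq_bigr do rewrite linear_sum mulr_sumr.
rewrite exchange_big; apply: eq_bigr => m _; rewrite scaler_sumr.
by apply: eq_bigr => i _; rewrite linearZ /= scalerAr.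
Qed.

Lemma coef_Lop p j :
  (Lop N A p)`_j = \sum_(j <= m < size p) p`_m * delta A m (m - j).
Proof.
rewrite -{1}[p]coefK poly_def Lop_sumZ coef_sum big_geq_mkord [RHS]big_mkcond /=.
by apply: eq_bigr => m _; rewrite coefZ coef_Lop_Xn; case: ifP; rewrite ?mulr0.
Qed.

Variables (lam : nat -> C) (P : nat -> {poly C}).
Hypothesis P_monic : forall n, P n \is monic.
Hypothesis size_P : forall n, size (P n) = n.+1.
Hypothesis Lop_P : forall n, Lop N A (P n) = lam n *: P n.

Lemma coef_P_diag n : (P n)`_n = 1.
Proof. by have := monicP (P_monic n); rewrite /lead_coef size_P. Qed.

Lemma delta_diag n : delta A n 0 = lam n.
Proof.
have := coef_Lop (P n) n.
by rewrite Lop_P coefZ size_P big_nat1 subnn coef_P_diag mul1r mulr1.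
Qed.

Lemma coef_P_rec n i : (i < n)%N ->
  (P n)`_i * (lam n - lam i) =
  \sum_(1 <= j < (n - i).+1) (P n)`_(i + j) * delta A (i + j) j.
Proof.
move=> i_lt; have := coef_Lop (P n) i.
rewrite Lop_P coefZ size_P big_ltn; last lia.
rewrite subnn delta_diag -[i.+1]add1n big_addn => eq_i.
rewrite mulrBr [_ * lam n]mulrC eq_i addrC addKr.
have -> : (n.+1 - i = (n - i).+1)%N by lia.
by apply: eq_bigr => j _; rewrite addnK addnC.
Qed.

Hypothesis lam0 : lam 0%N = 0.
Hypothesis lam_simple : forall n, (0 < n)%N ->
  lam n != 0 /\ (forall m, (0 < m < n)%N -> lam n != lam m).

Lemma lam_sub_neq0 n i : (i < n)%N -> lam n - lam i != 0.
Proof.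
move=> i_lt; have [lam_n_neq0 lam_n_neq] := @lam_simple n (leq_ltn_trans (leq0n i) i_lt).
rewrite subr_eq0.
by case: i i_lt => [|i] i_lt; [rewrite lam0 | apply: lam_n_neq].
Qed.

Definition step_weight n i j : C := delta A (i + j) j / (lam n - lam i).

Lemma coef_P_compositions n i : (i <= n)%N ->
  (P n)`_i = \sum_(c <- compositions (n - i)) path_weight (step_weight n) i c.
Proof.
move=> i_le; rewrite /compositions.
suff expand fuel D j : (D <= fuel)%N -> (j + D = n)%N ->
    (P n)`_j = \sum_(c <- compositions_rec fuel D) path_weight (step_weight n) j c.
  by apply: expand; lia.
clear i i_le; elim: fuel D j => [|fuel IH] [|D] i D_le iD //;
  try by rewrite big_seq1 -iD addn0 coef_P_diag.
have i_lt : (i < n)%N by lia.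
rewrite big_allpairs_dep -[LHS](mulfK (lam_sub_neq0 i_lt)) coef_P_rec //.
have -> : (n - i = D.+1)%N by lia.
rewrite mulr_suml; apply: eq_big_seq => j; rewrite mem_index_iota => /andP[j_ge j_lt].
rewrite (IH (D.+1 - j)%N (i + j)%N); try lia.
by rewrite -mulrA mulr_suml; apply: eq_bigr => c _; apply: mulrC.
Qed.

End EigenPolynomials.

Theorem theorem2 (C : numClosedFieldType) (N : nat) (A : nat -> {poly C})
    (lam : nat -> C) (P : nat -> {poly C}) :
  (1 <= N)%N ->
  (forall i, (size (A i) <= i.+1)%N) ->
  A 0%N = 0 ->
  (forall i, (N < i)%N -> A i = 0) ->
  lam 0%N = 0 ->
  (forall n, P n \is monic) ->
  (forall n, size (P n) = n.+1) ->
  (forall n, Lop N A (P n) = lam n *: P n) ->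
  (forall n, (0 < n)%N ->
     lam n != 0 /\ (forall m, (0 < m < n)%N -> lam n != lam m)) ->
  forall n i, (i < n)%N ->
    (P n)`_i =
    \sum_(1 <= k < (n - i).+1)
      \sum_(t : {ffun 'I_k -> 'I_(n - i).+1} |
              [forall s, (0 < t s)%N] && (\sum_(s < k) (t s : nat) == n - i)%N)
        \prod_(s < k)
          (delta A (i + \sum_(r < k | (r <= s)%N) (t r : nat)) (t s)
           / (lam n - lam (i + \sum_(r < k | (r < s)%N) (t r : nat))%N)).
Proof.
move=> _ size_A A0 A_gtN lam0 P_monic size_P Lop_P lam_simple n i i_lt.
rewrite (coef_P_compositions size_A A0 A_gtN P_monic size_P Lop_P lam0 lam_simple (ltnW i_lt)).
rewrite big_compositions_size ?subn_gt0 //; apply: eq_bigr => k _.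
rewrite -big_ffun_compositions; apply: eq_bigr => t _.
rewrite -prod_path_weight; apply: eq_bigr => s _.
by rewrite big_ord_leq_ltn addnA.
Qed.
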